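(* For all $T,S\in\,!\Lambda$, if $T\Rightarrow_v S$ then $S\Rightarrow_v T^*$.
   Context: Bang calculus terms $!\Lambda$: $T,S,R ::= x \mid \lambda x.T \mid T\,S \mid \mathrm{der}\,T \mid\ !T$ over a countably infinite set of variables, $\lambda$ the only binder, up to $\alpha$-conversion; $T\{S/x\}$ is capture-avoiding substitution. Parallel $v$-reduction $\Rightarrow_v$ is the least relation closed under the rules: $x\Rightarrow_v x$; if $T\Rightarrow_v S$ then $\lambda x.T\Rightarrow_v\lambda x.S$, $!T\Rightarrow_v\,!S$ and $\mathrm{der}\,T\Rightarrow_v\mathrm{der}\,S$; if $T\Rightarrow_v S$ and $R\Rightarrow_v Q$ then $T\,R\Rightarrow_v S\,Q$ and $(\lambda x.T)(!R)\Rightarrow_v S\{Q/x\}$. The full development $T^*$ is defined by induction: $x^*=x$, $(\lambda x.T)^*=\lambda x.T^*$, $(!T)^*=\,!(T^* )$, $(\mathrm{der}\,T)^*=\mathrm{der}(T^* )$, $((\lambda x.T)(!S))^*=T^*\{S^*/x\}$, and $(T\,S)^*=T^*\,S^*$ if $T$ is not an abstraction or $S$ is not a box. *)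

(* Bang-calculus terms up to alpha-conversion, represented
   with de Bruijn indices (a canonical representation of alpha-classes). *)
From Stdlib Require Import Arith.

Inductive term : Type :=
| Var  : nat -> term
| Lam  : term -> term
| App  : term -> term -> term
| Der  : term -> term
| Bang : term -> term.

Fixpoint lift (k n : nat) (t : term) : term :=
  match t with
  | Var i => if Nat.ltb i k then Var i else Var (i + n)
  | Lam t => Lam (lift (S k) n t)
  | App t s => App (lift k n t) (lift k n s)
  | Der t => Der (lift k n t)
  | Bang t => Bang (lift k n t)
  end.

(* subst t k s : capture-avoiding substitution of s for index k in t,
   free indices above k are decremented (the binder is removed). *)
Fixpoint subst (t : term) (k : nat) (s : term) : term :=
  match t with
  | Var i =>
      if Nat.ltb i k then Var i
      else if Nat.eqb i k then lift 0 k s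
      else Var (Nat.pred i)
  | Lam t => Lam (subst t (S k) s)
  | App t1 t2 => App (subst t1 k s) (subst t2 k s)
  | Der t => Der (subst t k s)
  | Bang t => Bang (subst t k s)
  end.

(* T{S/x} where T is the body of \x.T : substitute for index 0 *)
Definition subst0 (t s : term) : term := subst t 0 s.

Inductive par_v : term -> term -> Prop :=
| pv_var  : forall n, par_v (Var n) (Var n)
| pv_lam  : forall t s, par_v t s -> par_v (Lam t) (Lam s)
| pv_bang : forall t s, par_v t s -> par_v (Bang t) (Bang s)
| pv_der  : forall t s, par_v t s -> par_v (Der t) (Der s)
| pv_app  : forall t s r q, par_v t s -> par_v r q -> par_v (App t r) (App s q)
| pv_beta : forall t s r q, par_v t s -> par_v r q ->
    par_v (App (Lam t) (Bang r)) (subst0 s q).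

Notation "T ==>v S" := (par_v T S) (at level 70).

Fixpoint dev (t : term) : term :=
  match t with
  | Var i => Var i
  | Lam t => Lam (dev t)
  | Bang t => Bang (dev t)
  | Der t => Der (dev t)
  | App t1 t2 =>
      match t1, t2 with
      | Lam t', Bang s' => subst0 (dev t') (dev s')
      | _, _ => App (dev t1) (dev t2)
      end
  end.

(* Takahashi's method. By induction on T ==>v S: in every case the redexes of
   T that S has not yet contracted are still present in S, and contracting them
   in parallel reaches T^*. The only non-structural case is a contracted beta
   redex, where one needs that parallel reduction is stable under substitution;
   that in turn rests on the commutation laws of lifting and substitution of de
   Bruijn indices. *)
From Stdlib Require Import Arith Lia.

Ltac destruct_index_tests :=
  repeat match goal with
  | |- context [Nat.ltb ?a ?b] => destruct (Nat.ltb_spec a b)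
  | |- context [Nat.eqb ?a ?b] => destruct (Nat.eqb_spec a b)
  end.

Lemma lift_lift : forall t i j m n, i <= j -> j <= i + m ->
  lift j n (lift i m t) = lift i (m + n) t.
Proof.
  induction t; intros; simpl; f_equal; auto; try (apply IHt; lia).
  destruct_index_tests; simpl; destruct_index_tests; f_equal; lia.
Qed.

Lemma lift_lift_comm : forall t i j m n, i <= j ->
  lift (j + m) n (lift i m t) = lift i m (lift j n t).
Proof.
  induction t; intros; simpl.
  - destruct_index_tests; simpl; destruct_index_tests; f_equal; lia.
  - f_equal. replace (S (j + m)) with (S j + m) by lia. apply IHt; lia.
  - f_equal; auto.
  - f_equal; auto.
  - f_equal; auto.
Qed.

Lemma subst_lift : forall t i j n u, i <= j -> j <= i + n ->
  subst (lift i (S n) t) j u = lift i n t.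
Proof.
  induction t; intros; simpl; f_equal; auto; try (apply IHt; lia).
  destruct_index_tests; simpl; destruct_index_tests; f_equal; lia.
Qed.

Lemma lift_subst : forall t j k n s, j <= k ->
  lift k n (subst t j s) = subst (lift (S k) n t) j (lift (k - j) n s).
Proof.
  induction t; intros; simpl.
  - destruct_index_tests; simpl; destruct_index_tests; subst; try (f_equal; lia).
    (* cutoff k on [lift 0 j s] is cutoff k - j on [s] *)
    replace k with (k - j + j) at 1 by lia.
    apply lift_lift_comm; lia.
  - f_equal. replace (k - j) with (S k - S j) by lia. apply IHt; lia.
  - f_equal; auto.
  - f_equal; auto.
  - f_equal; auto.
Qed.

Lemma subst_lift_comm : forall u i m k s, i <= k ->
  subst (lift i m u) (k + m) s = lift i m (subst u k s).
Proof.
  induction u; intros; simpl.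
  - destruct_index_tests; simpl; destruct_index_tests; subst; try (f_equal; lia).
    rewrite lift_lift by lia. f_equal; lia.
  - f_equal. replace (S (k + m)) with (S k + m) by lia. apply IHu; lia.
  - f_equal; auto.
  - f_equal; auto.
  - f_equal; auto.
Qed.

Lemma subst_subst : forall t j k u s, j <= k ->
  subst (subst t j u) k s = subst (subst t (S k) s) j (subst u (k - j) s).
Proof.
  induction t; intros; simpl.
  - destruct_index_tests; simpl; destruct_index_tests; subst; try (f_equal; lia).
    + replace k with (k - j + j) at 1 by lia.
      apply (subst_lift_comm u 0 j (k - j) s); lia.
    + rewrite subst_lift by lia. f_equal; lia.
  - f_equal. replace (k - j) with (S k - S j) by lia. apply IHt; lia.
  - f_equal; auto.
  - f_equal; auto.
  - f_equal; auto.
Qed.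

Lemma par_v_refl : forall t, t ==>v t.
Proof. induction t; constructor; auto. Qed.

Lemma par_v_lift : forall t t', t ==>v t' ->
  forall k n, lift k n t ==>v lift k n t'.
Proof.
  induction 1; intros; simpl; try (constructor; auto).
  - apply par_v_refl.
  - unfold subst0. rewrite lift_subst, Nat.sub_0_r by lia.
    apply pv_beta; auto.
Qed.

Lemma par_v_subst : forall t t', t ==>v t' -> forall s s', s ==>v s' ->
  forall k, subst t k s ==>v subst t' k s'.
Proof.
  induction 1; intros; simpl; try (constructor; auto).
  - destruct_index_tests; try apply par_v_refl. apply par_v_lift; auto.
  - unfold subst0. rewrite subst_subst, Nat.sub_0_r by lia.
    apply pv_beta; auto.
Qed.

Lemma par_v_Lam_inv : forall t s, Lam t ==>v Lam s -> t ==>v s.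
Proof. intros t s H. inversion H; assumption. Qed.

Lemma par_v_Bang_inv : forall t s, Bang t ==>v Bang s -> t ==>v s.
Proof. intros t s H. inversion H; assumption. Qed.

Lemma par_v_app_dev : forall t r s q, t ==>v s -> r ==>v q ->
  s ==>v dev t -> q ==>v dev r -> App s q ==>v dev (App t r).
Proof.
  intros t r s q Hts Hrq Hst Hqr.
  destruct t as [| t' | | |]; try (constructor; assumption).
  destruct r as [| | | | r']; try (constructor; assumption).
  (* a redex left uncontracted in s is contracted by dev *)
  inversion Hts; subst. inversion Hrq; subst.
  apply pv_beta.
  - apply par_v_Lam_inv, Hst.
  - apply par_v_Bang_inv, Hqr.
Qed.

Theorem mainTheorem5 : forall T S : term, T ==>v S -> S ==>v dev T.
Proof.
  induction 1; simpl.
  - apply pv_var.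
  - apply pv_lam; assumption.
  - apply pv_bang; assumption.
  - apply pv_der; assumption.
  - apply par_v_app_dev; assumption.
  - apply par_v_subst; assumption.
Qed.
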